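(* There exists a regular $K_4$-saturated graph on $n$ vertices for every positive integer $n$ satisfying $n\equiv 6 \pmod 8$, for every positive integer $n$ satisfying $n\equiv 0\pmod 8$, and for every positive integer $n$ satisfying $n\equiv 0\pmod{17}$.
   Context: All graphs are finite and simple. A graph $G$ is $K_4$-saturated if it contains no copy of the complete graph $K_4$ but adding any edge between two non-adjacent vertices creates a copy of $K_4$. A graph is regular if all vertices have the same degree. *)

From mathcomp Require Import all_boot.
Set Implicit Arguments. Unset Strict Implicit. Unset Printing Implicit Defensive.

Definition simple_graph (T : finType) (e : rel T) : Prop :=
  symmetric e /\ irreflexive e.

Definition has_K4 (T : finType) (e : rel T) : Prop :=
  exists a b c d : T,
    [/\ uniq [:: a; b; c; d],
        [&& e a b, e a c & e a d],
        [&& e b c & e b d] & e c d].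

Definition add_edge (T : finType) (e : rel T) (u v : T) : rel T :=
  fun x y => e x y || ((x == u) && (y == v)) || ((x == v) && (y == u)).

Definition K4_saturated (T : finType) (e : rel T) : Prop :=
  ~ has_K4 e /\
  forall u v : T, u != v -> ~~ e u v -> has_K4 (add_edge e u v).

Definition regular_graph (T : finType) (e : rel T) : Prop :=
  exists k : nat, forall x : T, #|[set y | e x y]| = k.

From mathcomp Require Import all_boot zify.
Set Implicit Arguments. Unset Strict Implicit. Unset Printing Implicit Defensive.

(* For n = 8c + 6, join two vertices of Z_n when their cyclic distance lies in
   (c, 3c + 2].  Four vertices cut the cycle into four gaps, each in (c, 3c + 2]
   when the vertices are pairwise adjacent; both diagonals being short, two
   overlapping pairs of consecutive gaps sum to at most 3c + 2, so the gaps add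
   up to at most 8c + 5 < n.  Every non-edge is completed to a K4 by two
   explicit vertices.
   For n = 8t and n = 17t, replace every vertex of C5 (resp. of the Petersen
   graph) by t independent copies and join an independent set of 3t (resp. 7t)
   vertices to the result.  Blowing up preserves maximal triangle-freeness, and
   joining an independent set to a maximal triangle-free graph G gives a
   K4-saturated graph, regular when the independent set has |G| - deg G
   vertices: 3 = 5 - 2 and 7 = 10 - 3. *)

Definition regular_K4_saturated (T : finType) (e : rel T) : Prop :=
  [/\ simple_graph e, regular_graph e & K4_saturated e].

Lemma K4_of_clique (T : finType) (e : rel T) a b c d : irreflexive e ->
  e a b -> e a c -> e a d -> e b c -> e b d -> e c d -> has_K4 e.
Proof.
move=> e_irr ab ac ad bc bd cd.
exists a, b, c, d; split; rewrite ?ab ?ac ?ad ?bc ?bd ?cd //.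
have neq x y : e x y -> x != y by apply: contraTneq => ->; rewrite e_irr.
by rewrite /= !inE !negb_or !neq.
Qed.

Lemma add_edge_irr (T : finType) (e : rel T) u v :
  irreflexive e -> u != v -> irreflexive (add_edge e u v).
Proof.
move=> e_irr uv x; rewrite /add_edge e_irr /=.
by apply/negbTE; apply: contra uv => /orP[] /andP[/eqP <- /eqP <-].
Qed.

Lemma add_edgeC (T : finType) (e : rel T) u v : add_edge e u v =2 add_edge e v u.
Proof. by move=> x y; rewrite /add_edge orbAC. Qed.

Lemma K4_add_edge (T : finType) (e : rel T) u v w z : irreflexive e -> u != v ->
  e u w -> e v w -> e u z -> e v z -> e w z -> has_K4 (add_edge e u v).
Proof.
move=> e_irr uv uw vw uz vz wz; apply: (@K4_of_clique _ _ u v w z).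
  exact: add_edge_irr.
all: by rewrite /add_edge ?uw ?vw ?uz ?vz ?wz ?eqxx ?orbT.
Qed.

Lemma eq_has_K4 (T : finType) (e e' : rel T) : e =2 e' -> has_K4 e -> has_K4 e'.
Proof. by move=> ee' [a [b [c [d]]]]; rewrite !ee'; exists a, b, c, d. Qed.

Lemma has_K4_sorted n (e : rel 'I_n) : symmetric e -> has_K4 e ->
  exists a b c d : 'I_n,
    [/\ a < b < c, c < d & [&& e a b, e a c, e a d, e b c, e b d & e c d]].
Proof.
move=> e_sym [a [b [c [d [s_uniq /and3P[ab ac ad] /andP[bc bd] cd]]]]].
set s := [:: a; b; c; d] in s_uniq *.
have s_adj : {in s &, forall x y, x != y -> e x y}.
  by move=> x y; rewrite !inE => /or4P[]/eqP-> /or4P[]/eqP->; rewrite ?eqxx // e_sym.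
have t_perm : perm_eq (sort (relpre val leq) s) s := permEl (perm_sort _ s).
have t_sorted : sorted ltn (map val (sort (relpre val leq) s)).
  rewrite ltn_sorted_uniq_leq (map_inj_uniq val_inj) (perm_uniq t_perm) s_uniq sorted_map.
  by apply: sort_sorted => x y; apply: leq_total.
have t_adj x y :
    x \in sort (relpre val leq) s -> y \in sort (relpre val leq) s -> x < y -> e x y.
  rewrite !(perm_mem t_perm) => xs ys xy; apply: s_adj => //.
  by apply: contraTneq xy => ->; rewrite ltnn.
move: t_adj t_sorted (perm_size t_perm).
case: (sort _ s) => [|x1 [|x2 [|x3 [|x4 [|]]]]] //=.
move=> adj /and4P[x12 x23 x34 _] _; exists x1, x2, x3, x4; split; rewrite ?x12 ?x23 //.
have x13 := ltn_trans x12 x23; have x24 := ltn_trans x23 x34.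
have x14 := ltn_trans x12 x24.
by rewrite !adj ?inE ?eqxx ?orbT.
Qed.

Lemma has_K4_relpre (T1 T2 : finType) (f : T1 -> T2) (e : rel T2) :
  injective f -> has_K4 (relpre f e) -> has_K4 e.
Proof.
move=> f_inj [a [b [c [d [uniq_abcd abcd bcd cd]]]]]; exists (f a), (f b), (f c), (f d).
by split=> //; rewrite -[[:: _; _; _; _]]/(map f [:: a; b; c; d]) (map_inj_uniq f_inj).
Qed.

Section Relabel.

Variables (T1 T2 : finType) (f : T1 -> T2) (g : T2 -> T1).
Hypotheses (fK : cancel f g) (gK : cancel g f).

Lemma add_edge_relpre (e : rel T2) u v :
  add_edge e (f u) (f v) =2 relpre g (add_edge (relpre f e) u v).
Proof.
have eq_g x y : (g x == y) = (x == f y) by rewrite -(can_eq fK) gK.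
by move=> x y; rewrite /add_edge /= !gK !eq_g.
Qed.

Lemma regular_K4_saturated_relpre (e : rel T2) :
  regular_K4_saturated e -> regular_K4_saturated (relpre f e).
Proof.
move=> [[e_sym e_irr] [k e_reg] [e_K4 e_sat]]; split.
- by split=> [x y | x]; [apply: e_sym | apply: e_irr].
- exists k => x; rewrite -(e_reg (f x)) -(card_imset _ (can_inj gK)).
  by rewrite (can2_imset_pre _ gK fK); apply: eq_card => y; rewrite !inE.
- split=> [/(has_K4_relpre (can_inj fK)) // | u v uv not_uv].
  have /(e_sat _ _) /(_ not_uv) : f u != f v by rewrite (can_eq fK).
  by move/(eq_has_K4 (add_edge_relpre e u v)); exact: has_K4_relpre (can_inj gK).
Qed.

End Relabel.

Lemma regular_K4_saturated_ord (T : finType) (e : rel T) n : #|T| = n ->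
  regular_K4_saturated e -> exists e' : rel 'I_n, regular_K4_saturated e'.
Proof.
move=> <- e_sat; exists (relpre enum_val e).
exact: regular_K4_saturated_relpre (@enum_valK T) (@enum_rankK T) _ e_sat.
Qed.

Definition triangle_free (T : finType) (g : rel T) : Prop :=
  forall a b c, g a b -> g b c -> g a c -> False.

Definition max_triangle_free (T : finType) (g : rel T) : Prop :=
  triangle_free g /\ forall u v, u != v -> ~~ g u v -> exists w, g u w && g v w.

Lemma neighbour_of_degree (T : finType) (g : rel T) x k :
  #|[set y | g x y]| = k -> 0 < k -> exists y, g x y.
Proof. by move=> <- /card_gt0P [y]; rewrite inE; exists y. Qed.

Definition blowup (S : finType) (g : rel S) (t : nat) : rel (S * 'I_t) :=
  fun x y => g x.1 y.1.
Arguments blowup {S} g t.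

Section Blowup.

Variables (S : finType) (g : rel S).

Lemma blowup_sym t : symmetric g -> symmetric (blowup g t).
Proof. by move=> g_sym x y; apply: g_sym. Qed.

Lemma blowup_irr t : irreflexive g -> irreflexive (blowup g t).
Proof. by move=> g_irr x; apply: g_irr. Qed.

Lemma blowup_degree t x k :
  #|[set y | g x.1 y]| = k -> #|[set y | blowup g t x y]| = k * t.
Proof.
move=> <-; have -> : [set y | blowup g t x y] = setX [set y | g x.1 y] [set: 'I_t].
  by apply/setP => y; rewrite !inE andbT.
by rewrite cardsX cardsT card_ord.
Qed.

Lemma blowup_max_triangle_free t :
  max_triangle_free g -> (forall a, exists b, g a b) -> max_triangle_free (blowup g t).
Proof.
move=> [g_tri g_common] g_nbr.
split=> [a b c | [a i] [b j] ab not_ab]; first exact: g_tri.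
have [<- | a_b] := eqVneq a b.
  by have [c ac] := g_nbr a; exists (c, i); rewrite /blowup /= ac.
have [c /andP[ac bc]] := g_common a b a_b not_ab.
by exists (c, i); rewrite /blowup /= ac bc.
Qed.

End Blowup.

Definition join_coclique (I S : finType) (g : rel S) : rel (I + S) := fun x y =>
  match x, y with
  | inl _, inl _ => false
  | inr a, inr b => g a b
  | _, _ => true
  end.
Arguments join_coclique I {S} g.

Lemma card_sum_pred (I S : finType) (P : pred (I + S)) :
  #|P| = #|[pred i | P (inl i)]| + #|[pred a | P (inr a)]|.
Proof.
by rewrite !cardE /enum_mem !size_filter [in LHS]unlock count_cat !count_map.
Qed.

Section JoinCoclique.

Variables (I S : finType) (g : rel S).
Local Notation e := (join_coclique I g).

Lemma join_coclique_simple : simple_graph g -> simple_graph e.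
Proof. by move=> [g_sym g_irr]; split=> [[i|a] [j|b] | [i|a]] //=. Qed.

Lemma join_coclique_regular k :
  (forall a, #|[set b | g a b]| = k) -> #|I| + k = #|S| -> regular_graph e.
Proof.
move=> g_reg card_IS; exists #|S| => x; rewrite cardsE card_sum_pred.
case: x => [i | a] /=; first by rewrite card0 add0n; apply: eq_card => b.
by rewrite -card_IS -(g_reg a) cardsE; congr (_ + _); apply: eq_card.
Qed.

Lemma join_coclique_K4_free : triangle_free g -> ~ has_K4 e.
Proof.
move=> g_tri [a [b [c [d [_ /and3P[ab ac ad] /andP[bc bd] cd]]]]].
case: a b c d ab ac ad bc bd cd => [a|a] [b|b] [c|c] [d|d] //= ab ac ad bc bd cd;
  first [exact: g_tri ab bc ac | exact: g_tri bc cd bd | exact: g_tri ac cd ad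
        | exact: g_tri ab bd ad].
Qed.

Lemma join_coclique_K4_saturated (i0 : I) a0 b0 : irreflexive g -> g a0 b0 ->
  max_triangle_free g -> K4_saturated e.
Proof.
move=> g_irr ab0 [g_tri g_common]; split=> [|u v uv not_uv].
  exact: join_coclique_K4_free.
have e_irr : irreflexive e by case=> //=.
case: u v uv not_uv => [i|a] [j|b] //= ij not_ij.
  exact: (@K4_add_edge _ _ _ _ (inr a0) (inr b0)).
have [w /andP[aw bw]] := g_common a b ij not_ij.
exact: (@K4_add_edge _ _ _ _ (inr w) (inl i0)).
Qed.

End JoinCoclique.

Lemma join_blowup_regular_K4_saturated (S : finType) (g : rel S) m k t :
  simple_graph g -> max_triangle_free g -> (forall a, #|[set b | g a b]| = k) ->
  m + k = #|S| -> 0 < m -> 0 < k -> 0 < t ->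
  regular_K4_saturated (join_coclique 'I_(m * t) (blowup g t)).
Proof.
move=> [g_sym g_irr] g_mtf g_reg card_S m_gt0 k_gt0 t_gt0.
have g_nbr a : exists b, g a b by apply: neighbour_of_degree (g_reg a) k_gt0.
have h_mtf : max_triangle_free (blowup g t) by apply: blowup_max_triangle_free.
have h_irr : irreflexive (blowup g t) by apply: blowup_irr.
split.
- by apply: join_coclique_simple; split=> //; apply: blowup_sym.
- apply: (join_coclique_regular (k := k * t)) => [x | ].
    exact: blowup_degree (g_reg x.1).
  by rewrite card_prod !card_ord -card_S mulnDl.
- have /card_gt0P [a0 _] : 0 < #|S| by rewrite -card_S addn_gt0 m_gt0.
  have [b0 ab0] := g_nbr a0.
  have h_edge : blowup g t (a0, Ordinal t_gt0) (b0, Ordinal t_gt0) := ab0.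
  have mt_gt0 : 0 < m * t by rewrite muln_gt0 m_gt0.
  exact (join_coclique_K4_saturated (Ordinal mt_gt0) h_irr h_edge h_mtf).
Qed.

Lemma regular_K4_saturated_dvd (S : finType) (g : rel S) m k n :
  simple_graph g -> max_triangle_free g -> (forall a, #|[set b | g a b]| = k) ->
  m + k = #|S| -> 0 < m -> 0 < k -> 0 < n -> m + #|S| %| n ->
  exists e : rel 'I_n, regular_K4_saturated e.
Proof.
move=> g_simple g_mtf g_reg card_S m_gt0 k_gt0 n_gt0 /dvdnP [t n_eq].
have t_gt0 : 0 < t by move: n_gt0; rewrite n_eq muln_gt0 => /andP[].
apply: regular_K4_saturated_ord
  (join_blowup_regular_K4_saturated g_simple g_mtf g_reg card_S m_gt0 k_gt0 t_gt0).
by rewrite card_sum card_prod !card_ord n_eq; lia.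
Qed.

Lemma forall_ord_iota n (p : pred nat) : all p (iota 0 n) -> forall x : 'I_n, p x.
Proof. by move=> /allP p_all x; apply: p_all; rewrite mem_iota add0n ltn_ord. Qed.

Lemma exists_ord_iota n (p : pred nat) : has p (iota 0 n) -> exists x : 'I_n, p x.
Proof.
by move=> /hasP [x]; rewrite mem_iota => /andP[_ x_lt] px; exists (Ordinal x_lt).
Qed.

Lemma card_ord_iota n (p : pred nat) : #|[set x : 'I_n | p x]| = count p (iota 0 n).
Proof.
rewrite cardsE cardE /enum_mem size_filter -val_enum_ord count_map enumT.
by apply: eq_count.
Qed.

(* Checks run over [iota 0 n] rather than over ['I_n]: enumerating ordinals goes
   through [insub], which does not compute since [idP] is opaque. *)
Section EvalGraph.

Variables (n : nat) (h : rel nat).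
Local Notation V := (iota 0 n).
Local Notation g := (fun x y : 'I_n => h x y).

Lemma simple_graph_iota :
  all (fun a => all (fun b => h a b == h b a) V) V -> all (fun a => ~~ h a a) V ->
  simple_graph g.
Proof.
move=> h_sym h_irr; split=> [x y | x]; last exact/negbTE/(forall_ord_iota h_irr).
exact/eqP/(forall_ord_iota (forall_ord_iota h_sym x)).
Qed.

Lemma max_triangle_free_iota :
  all (fun a => all (fun b => all (fun c => ~~ [&& h a b, h b c & h a c]) V) V) V ->
  all (fun u => all (fun v =>
    (u != v) && ~~ h u v ==> has (fun w => h u w && h v w) V) V) V ->
  max_triangle_free g.
Proof.
move=> h_tri h_common; split=> [a b c ab bc ac | u v uv not_uv].
  have := forall_ord_iota (forall_ord_iota (forall_ord_iota h_tri a) b) c.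
  by rewrite ab bc ac.
have := forall_ord_iota (forall_ord_iota h_common u) v.
by rewrite uv not_uv => /exists_ord_iota.
Qed.

Lemma degree_iota k : all (fun a => count (h a) V == k) V ->
  forall x : 'I_n, #|[set y | g x y]| = k.
Proof. by move=> h_reg x; rewrite card_ord_iota; apply/eqP/(forall_ord_iota h_reg). Qed.

End EvalGraph.

(* Cyclic distance in Z_N; [x - y + (y - x)] is [|x - y|] despite truncated
   subtraction. *)
Definition cdist (N x y : nat) : nat :=
  minn (x - y + (y - x)) (N - (x - y + (y - x))).

Definition circulant (N : nat) (C : pred nat) : rel 'I_N := fun x y => C (cdist N x y).
Arguments circulant : clear implicits.

Lemma cdist_sym N x y : cdist N x y = cdist N y x.
Proof. by rewrite /cdist addnC. Qed.

Lemma cdist_le N x y : x <= y -> cdist N x y = minn (y - x) (N - (y - x)).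
Proof. by move=> xy; rewrite /cdist (eqP (xy : x - y == 0)). Qed.

Lemma cdist_ordS N (x y : 'I_N) : cdist N (ordS x) (ordS y) = cdist N x y.
Proof.
have val_ordS (z : 'I_N) : ordS z = (if z.+1 == N then 0 else z.+1) :> nat.
  case: eqP => /= [-> | z1_neq]; first exact: modnn.
  by rewrite modn_small // ltn_neqAle; apply/andP; split; [apply/eqP | exact: ltn_ord].
rewrite /cdist !val_ordS; move: (ltn_ord x) (ltn_ord y).
by case: eqP; case: eqP; lia.
Qed.

Lemma regular_ordS_invariant N (e : rel 'I_N) :
  (forall x y, e (ordS x) (ordS y) = e x y) -> regular_graph e.
Proof.
case: N e => [|N] e e_ordS; first by exists 0 => -[].
have deg_ordS x : #|[set y | e (ordS x) y]| = #|[set y | e x y]|.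
  rewrite -(card_preimset _ (@ordS_inj _)).
  by apply: eq_card => y; rewrite !inE e_ordS.
exists #|[set y | e ord0 y]| => -[i]; elim: i => [|i IH] i_lt.
  by have -> : Ordinal i_lt = ord0 by apply: val_inj.
have -> : Ordinal i_lt = ordS (Ordinal (ltnW i_lt)).
  by apply: val_inj; rewrite /= modn_small.
by rewrite deg_ordS IH.
Qed.

Lemma circulant_simple N C : ~~ C 0 -> simple_graph (circulant N C).
Proof.
move=> C0; split=> [x y | x]; first by rewrite /circulant cdist_sym.
by rewrite /circulant /cdist subnn addn0 min0n (negbTE C0).
Qed.

Lemma circulant_regular N C : regular_graph (circulant N C).
Proof. by apply: regular_ordS_invariant => x y; rewrite /circulant cdist_ordS. Qed.

Definition cycle5 : rel 'I_5 := circulant 5 (pred1 1).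

(* Outer 5-cycle on 0..4, inner pentagram on 5..9 and spokes i -- i + 5. *)
Definition petersen_nat (x y : nat) : bool :=
  let d := cdist 5 (x %% 5) (y %% 5) in
  if (x < 5) && (y < 5) then d == 1
  else if (5 <= x) && (5 <= y) then d == 2
  else x %% 5 == y %% 5.

Definition petersen : rel 'I_10 := fun x y => petersen_nat x y.

Lemma cycle5_properties :
  [/\ simple_graph cycle5, max_triangle_free cycle5
    & forall x, #|[set y | cycle5 x y]| = 2].
Proof.
split; first exact: circulant_simple.
  by apply: (@max_triangle_free_iota 5 (fun x y => cdist 5 x y == 1)); vm_compute.
by apply: (@degree_iota 5 (fun x y => cdist 5 x y == 1)); vm_compute.
Qed.

Lemma petersen_properties :
  [/\ simple_graph petersen, max_triangle_free petersen
    & forall x, #|[set y | petersen x y]| = 3].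
Proof.
split; [ apply: (@simple_graph_iota 10 petersen_nat)
       | apply: (@max_triangle_free_iota 10 petersen_nat)
       | apply: (@degree_iota 10 petersen_nat) ]; by vm_compute.
Qed.

Definition band (c : nat) : pred nat := fun d => c < d <= 3 * c + 2.

Definition band_circulant (c : nat) : rel 'I_(8 * c + 6) :=
  circulant (8 * c + 6) (band c).
Arguments band_circulant : clear implicits.

Lemma band_cdist_le c x y : x <= y < 8 * c + 6 ->
  band c (cdist (8 * c + 6) x y)
  = (c < y - x <= 3 * c + 2) || (5 * c + 4 <= y - x < 7 * c + 6).
Proof. by case/andP=> xy yN; rewrite /band cdist_le //; apply/idP/idP; lia. Qed.

Lemma band_no_four_points c x1 x2 x3 x4 :
  x1 < x2 -> x2 < x3 -> x3 < x4 -> x4 < 8 * c + 6 ->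
  [&& band c (cdist (8 * c + 6) x1 x2), band c (cdist (8 * c + 6) x1 x3),
      band c (cdist (8 * c + 6) x1 x4), band c (cdist (8 * c + 6) x2 x3),
      band c (cdist (8 * c + 6) x2 x4) & band c (cdist (8 * c + 6) x3 x4)] -> False.
Proof.
move=> x12 x23 x34 x4N /and5P[a12 a13 a14 a23 /andP[a24 a34]].
by move: a12 a13 a14 a23 a24 a34; rewrite !band_cdist_le; lia.
Qed.

Lemma band_circulant_K4_free c : ~ has_K4 (band_circulant c).
Proof.
have [e_sym _] : simple_graph (band_circulant c) by apply: circulant_simple.
case/(has_K4_sorted e_sym) => [x1 [x2 [x3 [x4 [/andP[x12 x23] x34]]]]].
exact: band_no_four_points x12 x23 x34 (ltn_ord x4).
Qed.

Lemma wrap_mod N v : v < 2 * N -> exists2 w, w < N & (w = v \/ w + N = v).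
Proof.
case: (ltnP v N) => [v_lt | v_ge] v_lt2; first by exists v; [|left].
by exists (v - N); [|right]; lia.
Qed.

Lemma band_K4_completion c x y :
  x < y < 8 * c + 6 -> ~~ band c (cdist (8 * c + 6) x y) ->
  exists w z, [/\ w < 8 * c + 6, z < 8 * c + 6 &
    [&& band c (cdist (8 * c + 6) x w), band c (cdist (8 * c + 6) y w),
        band c (cdist (8 * c + 6) x z), band c (cdist (8 * c + 6) y z)
      & band c (cdist (8 * c + 6) w z)]].
Proof.
move=> /andP[xy yN] not_xy.
have {not_xy} : y - x <= c \/ 7 * c + 6 <= y - x
    \/ 3 * c + 3 <= y - x <= 4 * c + 3 \/ 4 * c + 4 <= y - x <= 5 * c + 3.
  by move: not_xy; rewrite /band cdist_le; lia.
(* Short gap: w, z at distance 3c + 2 past x and 5c + 4 past y; long gap: w, z at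
   distance c + 1 inside the shorter arc; the other two cases swap x and y. *)
case=> [D | [D | [D | D]]]; [
  have [w w_lt w_eq] := @wrap_mod (8 * c + 6) (x + (3 * c + 2)) ltac:(lia);
  have [z z_lt z_eq] := @wrap_mod (8 * c + 6) (y + (5 * c + 4)) ltac:(lia)
| have [w w_lt w_eq] := @wrap_mod (8 * c + 6) (y + (3 * c + 2)) ltac:(lia);
  have [z z_lt z_eq] := @wrap_mod (8 * c + 6) (x + (5 * c + 4)) ltac:(lia)
| have [w w_lt w_eq] := @wrap_mod (8 * c + 6) (x + (c + 1)) ltac:(lia);
  have [z z_lt z_eq] := @wrap_mod (8 * c + 6) (y + (7 * c + 5)) ltac:(lia)
| have [w w_lt w_eq] := @wrap_mod (8 * c + 6) (y + (c + 1)) ltac:(lia);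
  have [z z_lt z_eq] := @wrap_mod (8 * c + 6) (x + (7 * c + 5)) ltac:(lia) ];
  by exists w, z; split=> //; apply/and5P; split; rewrite /band /cdist; lia.
Qed.

Lemma band_circulant_regular_K4_saturated c : regular_K4_saturated (band_circulant c).
Proof.
have [e_sym e_irr] : simple_graph (band_circulant c) by apply: circulant_simple.
split=> //; first exact: circulant_regular.
split=> [|u v]; first exact: band_circulant_K4_free.
wlog lt_uv : u v / u < v => [hwlog uv not_uv | uv not_uv].
  case: (ltngtP u v) => [lt_uv | lt_vu | /val_inj eq_uv]; first exact: hwlog.
  - apply: eq_has_K4 (add_edgeC _ v u) _.
    by apply: hwlog; [| rewrite eq_sym | rewrite e_sym].
  - by rewrite eq_uv eqxx in uv.
have uvN : u < v < 8 * c + 6 by rewrite lt_uv ltn_ord.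
have [w [z [wN zN /and5P[uw vw uz vz wz]]]] := band_K4_completion uvN not_uv.
exact: (@K4_add_edge _ _ u v (Ordinal wN) (Ordinal zN)).
Qed.

Theorem proposition4p1 (n : nat) :
  0 < n ->
  (n %% 8 = 6 \/ n %% 8 = 0 \/ n %% 17 = 0) ->
  exists e : rel 'I_n,
    [/\ simple_graph e, regular_graph e & K4_saturated e].
Proof.
move=> n_gt0 [n6 | [n8 | n17]].
- have -> : n = 8 * (n %/ 8) + 6 by rewrite {1}(divn_eq n 8) n6 mulnC.
  by exists (band_circulant (n %/ 8)); apply: band_circulant_regular_K4_saturated.
- have [C5_simple C5_mtf C5_deg] := cycle5_properties.
  apply: (regular_K4_saturated_dvd (m := 3) C5_simple C5_mtf C5_deg) => //.
  + by rewrite card_ord.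
  + by rewrite card_ord /dvdn n8.
- have [P_simple P_mtf P_deg] := petersen_properties.
  apply: (regular_K4_saturated_dvd (m := 7) P_simple P_mtf P_deg) => //.
  + by rewrite card_ord.
  + by rewrite card_ord /dvdn n17.
Qed.
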